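(* Among all allowed 3-stick folded ribbon unknots $K_{w,F}$ in which the folds at all three vertices are of the same type, the minimum ribbonlength is $3\sqrt{3}$, and it is attained when the knot diagram is an equilateral triangle.
   Context: For an oriented polygonal knot diagram $K$ that is a triangle with vertices $v_1,v_2,v_3$ and edges $e_i=[v_i,v_{i+1}]$ (indices mod 3), the fold angle $\theta_i\in[0,\pi]$ at $v_i$ is the angle between $e_{i-1}$ and $e_i$. The folded ribbon $K_w$ of width $w$ has at each $v_i$ a fold line of length $w/\cos(\theta_i/2)$ centered at $v_i$ perpendicular to the bisector of $\theta_i$, with boundary segments parallel to and at distance $w/2$ from each edge joining consecutive fold lines. Folding information $F$ records at each vertex whether the ribbon of $e_i$ lies over (overfold) or under (underfold) the ribbon of $e_{i-1}$; folds of the same type means all overfolds or all underfolds. $K_{w,F}$ is allowed if the ribbon is immersed away from fold lines and admits crossing information (a continuous, antisymmetric, transitive $\pm1$-valued function on pairs of distinct points of the ribbon with the same planar image) agreeing with $F$. The ribbonlength is $\operatorname{length}(K)/w$.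
   Formalization: The folded ribbon $K_w$ is taken open, without its boundary segments: each piece consists of points at distance less than $w/2$ from the line of its edge, and fold lines omit their endpoints. Apart from conventions, each condition added here is assumed in the paper as well or is needed for the statement above to hold. *)

From Stdlib Require Import Reals Lra Arith ZArith.
Open Scope R_scope.

Definition pt := (R * R)%type.
Definition vadd (p q : pt) : pt := (fst p + fst q, snd p + snd q).
Definition vsub (p q : pt) : pt := (fst p - fst q, snd p - snd q).
Definition vscale (l : R) (p : pt) : pt := (l * fst p, l * snd p).
Definition dot (p q : pt) : R := fst p * fst q + snd p * snd q.
Definition cross (p q : pt) : R := fst p * snd q - snd p * fst q.
Definition norm (p : pt) : R := sqrt (dot p p).
Definition dist (p q : pt) : R := norm (vsub p q).
Definition unitv (p : pt) : pt := (fst p / norm p, snd p / norm p).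
Definition perp (p : pt) : pt := (- snd p, fst p).

(* The triangle knot diagram with vertices v_0 = a, v_1 = b, v_2 = c;
   indices are taken mod 3, edge e_i = [v_i, v_(i+1)]. *)
Definition vert (a b c : pt) (i : nat) : pt :=
  match Nat.modulo i 3 with 0%nat => a | 1%nat => b | _ => c end.

Definition prev (i : nat) : nat := Nat.modulo (i + 2) 3.
Definition next (i : nat) : nat := Nat.modulo (i + 1) 3.

Definition is_triangle (a b c : pt) : Prop := cross (vsub b a) (vsub c a) <> 0.

Definition equilateral (a b c : pt) : Prop :=
  dist a b = dist b c /\ dist b c = dist c a.

Definition fold_angle (a b c : pt) (i : nat) : R :=
  let u := vsub (vert a b c (prev i)) (vert a b c i) in
  let u' := vsub (vert a b c (i + 1)) (vert a b c i) in
  acos (dot u u' / (norm u * norm u')).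

Definition bis (a b c : pt) (i : nat) : pt :=
  vadd (unitv (vsub (vert a b c (prev i)) (vert a b c i)))
       (unitv (vsub (vert a b c (i + 1)) (vert a b c i))).

(* The fold line at v_i: the segment of length w / cos(theta_i / 2) centred at
   v_i and perpendicular to the bisector.  (Relative) interior of the segment:
   the ribbon is taken without its boundary edges. *)
Definition on_fold (a b c : pt) (w : R) (i : nat) (p : pt) : Prop :=
  exists l : R, Rabs l < w / (2 * cos (fold_angle a b c i / 2)) /\
    p = vadd (vert a b c i) (vscale l (unitv (perp (bis a b c i)))).

Definition in_strip (a b c : pt) (w : R) (i : nat) (p : pt) : Prop :=
  Rabs (cross (unitv (vsub (vert a b c (i + 1)) (vert a b c i)))
              (vsub p (vert a b c i))) < w / 2.

(* the ribbon piece of edge e_i: the part of the strip lying between the fold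
   line at v_i and the fold line at v_(i+1) *)
Definition piece (a b c : pt) (w : R) (i : nat) (p : pt) : Prop :=
  in_strip a b c w i p /\
  0 <= dot (vsub p (vert a b c i)) (bis a b c i) /\
  0 <= dot (vsub p (vert a b c (i + 1))) (bis a b c (i + 1)).

(* immersion away from the fold lines: the two fold lines bounding the ribbon
   of e_i do not cross inside the ribbon of e_i (so each piece is a genuine
   trapezoid, mapped injectively into the plane) *)
Definition immersed (a b c : pt) (w : R) : Prop :=
  forall i : nat, (i < 3)%nat -> forall p : pt, in_strip a b c w i p ->
    ~ (dot (vsub p (vert a b c i)) (bis a b c i) < 0 /\
       dot (vsub p (vert a b c (i + 1))) (bis a b c (i + 1)) < 0).

(* Points of the ribbon K_w: pairs (i, p) with p in the piece of e_i
   (p is the planar image of the point). *)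
Definition rpt := (nat * pt)%type.

Definition is_rpt (a b c : pt) (w : R) (x : rpt) : Prop :=
  (fst x < 3)%nat /\ piece a b c w (fst x) (snd x).

(* two representatives denote the same point of the ribbon: same piece and same
   position, or adjacent pieces glued along the common fold line *)
Definition same_rpt (a b c : pt) (w : R) (x y : rpt) : Prop :=
  snd x = snd y /\
  (fst x = fst y \/
   (fst y = next (fst x) /\ on_fold a b c w (fst y) (snd x)) \/
   (fst x = next (fst y) /\ on_fold a b c w (fst x) (snd x))).

Definition overlap (a b c : pt) (w : R) (x y : rpt) : Prop :=
  is_rpt a b c w x /\ is_rpt a b c w y /\ snd x = snd y /\ ~ same_rpt a b c w x y.

(* basic neighbourhoods of x in the ribbon (intrinsic topology of the glued
   ribbon): points x' whose image is delta-close, lying in the piece of x or in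
   a piece glued to x along a fold line through x *)
Definition rnear (a b c : pt) (w : R) (delta : R) (x x' : rpt) : Prop :=
  dist (snd x) (snd x') < delta /\ same_rpt a b c w x (fst x', snd x).

(* crossing information: eps x y = 1 means x lies over y, -1 means under *)
Definition crossing_info (a b c : pt) (w : R) (eps : rpt -> rpt -> Z) : Prop :=
  (forall x y, overlap a b c w x y -> eps x y = 1%Z \/ eps x y = (-1)%Z) /\
  (forall x x' y y', overlap a b c w x y -> is_rpt a b c w x' -> is_rpt a b c w y' ->
     same_rpt a b c w x x' -> same_rpt a b c w y y' -> eps x' y' = eps x y) /\
  (forall x y, overlap a b c w x y -> eps y x = (- eps x y)%Z) /\
  (forall x y z, overlap a b c w x y -> overlap a b c w y z -> overlap a b c w x z ->
     eps x y = 1%Z -> eps y z = 1%Z -> eps x z = 1%Z) /\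
  (* continuous (i.e. locally constant) on the set of such pairs *)
  (forall x y, overlap a b c w x y -> exists delta, 0 < delta /\
     forall x' y', overlap a b c w x' y' -> rnear a b c w delta x x' ->
       rnear a b c w delta y y' -> eps x' y' = eps x y).

(* folding information F: F i = true iff the fold at v_i is an overfold, i.e.
   the ribbon of e_i lies over the ribbon of e_(i-1) there. *)
Definition agrees (a b c : pt) (w : R) (F : nat -> bool) (eps : rpt -> rpt -> Z) : Prop :=
  forall i : nat, (i < 3)%nat -> exists delta, 0 < delta /\
    forall p : pt, is_rpt a b c w (i, p) -> is_rpt a b c w (prev i, p) ->
      (exists q, on_fold a b c w i q /\ dist p q < delta) ->
      ~ same_rpt a b c w (i, p) (prev i, p) ->
      eps (i, p) (prev i, p) = (if F i then 1%Z else (-1)%Z).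

Definition same_type (F : nat -> bool) : Prop := F 0%nat = F 1%nat /\ F 1%nat = F 2%nat.

Definition allowed (a b c : pt) (w : R) (F : nat -> bool) : Prop :=
  is_triangle a b c /\ 0 < w /\ immersed a b c w /\
  exists eps, crossing_info a b c w eps /\ agrees a b c w F eps.

Definition ribbonlength (a b c : pt) (w : R) : R :=
  (dist a b + dist b c + dist c a) / w.

(* Lower bound: if w/2 exceeded the inradius r, the incenter would lie on all
   three pieces of the ribbon.  Moving from the vertex v_i to the incenter inside
   pieces i and i-1, continuity of the crossing information carries the fold
   information at v_i to the incenter, so with folds of one type the three
   pieces lie cyclically over one another there, contradicting transitivity.
   Hence w <= 2r = 2|K|/P, where |K| is twice the area and P the perimeter, and
   the isoperimetric inequality for triangles P^2 >= 6 sqrt 3 |K| (Heron and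
   AM-GM) gives P/w >= P^2/(2|K|) >= 3 sqrt 3.
   Equality: for an equilateral triangle with w = 2r the strips have no common
   point, each fold line is parallel to the opposite side at distance 3r, and the
   ribbon is immersed, so "piece i lies over piece i-1 at overfolds" is a valid
   crossing information, and P/(2r) = 3 sqrt 3. *)

From Pilot Require Import Defs.
From Stdlib Require Import Reals Lra Lia Psatz ZArith Classical.
Open Scope R_scope.

Lemma dot_self_ge0 u : 0 <= dot u u.
Proof. destruct u; unfold dot; simpl; nra. Qed.

Lemma norm_ge0 u : 0 <= norm u.
Proof. apply sqrt_pos. Qed.

Lemma norm_sq u : norm u * norm u = dot u u.
Proof. apply sqrt_sqrt, dot_self_ge0. Qed.

Lemma norm_vsub_sym p q : norm (vsub p q) = norm (vsub q p).
Proof. unfold norm; f_equal; destruct p, q; unfold dot, vsub; simpl; ring. Qed.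

Lemma norm_vscale l u : norm (vscale l u) = Rabs l * norm u.
Proof.
  destruct u as [x y]; unfold norm, vscale, dot; simpl.
  replace (l * x * (l * x) + l * y * (l * y)) with ((l * l) * (x * x + y * y)) by ring.
  rewrite sqrt_mult_alt by nra; f_equal; apply sqrt_Rsqr_abs.
Qed.

Lemma lagrange_identity u v :
  dot u v * dot u v + cross u v * cross u v = dot u u * dot v v.
Proof. destruct u, v; unfold dot, cross; simpl; ring. Qed.

Lemma norm_gt0_of_cross u v : cross u v <> 0 -> 0 < norm u /\ 0 < norm v.
Proof.
  intro Huv; pose proof (lagrange_identity u v).
  pose proof (dot_self_ge0 u); pose proof (dot_self_ge0 v).
  assert (0 < cross u v * cross u v) by (apply Rsqr_pos_lt in Huv; exact Huv).
  assert (0 < dot u u) by nra; assert (0 < dot v v) by nra.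
  split; apply sqrt_lt_R0; assumption.
Qed.

Lemma abs_dot_lt_norm_mul u v : cross u v <> 0 -> Rabs (dot u v) < norm u * norm v.
Proof.
  intro Huv; destruct (norm_gt0_of_cross u v Huv) as [Hu Hv].
  pose proof (lagrange_identity u v) as L; rewrite <- (norm_sq u), <- (norm_sq v) in L.
  assert (0 < cross u v * cross u v) by (apply Rsqr_pos_lt in Huv; exact Huv).
  assert (0 < norm u * norm v) by nra.
  apply Rabs_def1; nra.
Qed.

Lemma cross_unitv_l u q : cross (unitv u) q = cross u q / norm u.
Proof. destruct u, q; unfold cross, unitv; simpl; unfold Rdiv; ring. Qed.

Lemma cross_unitv_r q u : cross q (unitv u) = cross q u / norm u.
Proof. destruct u, q; unfold cross, unitv; simpl; unfold Rdiv; ring. Qed.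

Lemma dot_unitv_sum q u v :
  dot q (vadd (unitv u) (unitv v)) = dot q u / norm u + dot q v / norm v.
Proof. destruct q, u, v; unfold dot, vadd, unitv; simpl; unfold Rdiv; ring. Qed.

Lemma Rabs_div_pos x s : 0 < s -> Rabs (x / s) = Rabs x / s.
Proof. intro; unfold Rdiv; rewrite Rabs_mult, Rabs_inv, (Rabs_right s) by lra; reflexivity. Qed.

(* [dot (x u + y v) (u/|u| + v/|v|) = (x/|v| + y/|u|) (|u| |v| + dot u v)]
   and [|dot u v| < |u| |v|]. *)
Lemma bisector_dot_cone u v x y : cross u v <> 0 -> 0 <= x -> 0 <= y ->
  0 <= dot (vadd (vscale x u) (vscale y v)) (vadd (unitv u) (unitv v)) /\
  (0 < x + y -> 0 < dot (vadd (vscale x u) (vscale y v)) (vadd (unitv u) (unitv v))).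
Proof.
  intros Huv Hx Hy; destruct (norm_gt0_of_cross u v Huv) as [Hu Hv].
  pose proof (abs_dot_lt_norm_mul u v Huv) as Hd; apply Rabs_def2 in Hd.
  rewrite dot_unitv_sum.
  assert (E : dot (vadd (vscale x u) (vscale y v)) u / norm u
              + dot (vadd (vscale x u) (vscale y v)) v / norm v
              = (x / norm v + y / norm u) * (norm u * norm v + dot u v)).
  { replace (dot (vadd (vscale x u) (vscale y v)) u) with (x * (norm u * norm u) + y * dot u v)
      by (rewrite norm_sq; destruct u, v; unfold dot, vadd, vscale; simpl; ring).
    replace (dot (vadd (vscale x u) (vscale y v)) v) with (x * dot u v + y * (norm v * norm v))
      by (rewrite norm_sq; destruct u, v; unfold dot, vadd, vscale; simpl; ring).
    field; lra. }
  rewrite E.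
  assert (0 <= x / norm v) by (apply Rle_mult_inv_pos; lra).
  assert (0 <= y / norm u) by (apply Rle_mult_inv_pos; lra).
  split; [nra|]; intro Hxy.
  destruct (Rlt_dec 0 x).
  - assert (0 < x / norm v) by (apply Rdiv_lt_0_compat; lra); nra.
  - assert (0 < y / norm u) by (apply Rdiv_lt_0_compat; lra); nra.
Qed.

Lemma dist_affine p d s t :
  Defs.dist (vadd p (vscale s d)) (vadd p (vscale t d)) = Rabs (s - t) * norm d.
Proof.
  unfold Defs.dist; rewrite <- norm_vscale; f_equal.
  destruct p, d; unfold vadd, vscale, vsub; simpl; f_equal; ring.
Qed.

Lemma dist_affine_base p d t : Defs.dist (vadd p (vscale t d)) p = Rabs t * norm d.
Proof.
  replace p with (vadd p (vscale 0 d)) at 2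
    by (destruct p, d; unfold vadd, vscale; simpl; f_equal; ring).
  rewrite dist_affine, Rminus_0_r; reflexivity.
Qed.

Lemma locally_constant_eq {A : Type} (g : R -> A) s t : s <= t ->
  (forall x, s <= x <= t -> exists d, 0 < d /\
     forall y, s <= y <= t -> Rabs (y - x) < d -> g y = g x) ->
  g t = g s.
Proof.
  intros Hst Hloc.
  set (E := fun x => s <= x <= t /\ forall y, s <= y <= x -> g y = g s).
  assert (Es : E s) by (split; [lra | intros y Hy; replace y with s by lra; reflexivity]).
  destruct (completeness E) as [m [Hub Hlub]];
    [exists t; intros x [Hx _]; lra | exists s; exact Es |].
  assert (Hsm : s <= m) by (apply Hub, Es).
  assert (Hmt : m <= t) by (apply Hlub; intros x [Hx _]; lra).
  assert (Hbelow : forall y, s <= y < m -> g y = g s).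
  { intros y Hy; apply NNPP; intro Hne.
    assert (m <= y); [|lra].
    apply Hlub; intros x [Hx Hgx]; apply Rnot_lt_le; intro Hyx; apply Hne, Hgx; lra. }
  destruct (Hloc m (conj Hsm Hmt)) as [d [Hd Hgd]].
  assert (Hgm : g m = g s).
  { destruct (Req_dec m s) as [-> | Hne]; [reflexivity|].
    set (y := Rmax s (m - d / 2)).
    assert (s <= y) by apply Rmax_l; assert (m - d / 2 <= y) by apply Rmax_r.
    assert (y < m) by (apply Rmax_lub_lt; lra).
    rewrite <- (Hgd y), Hbelow by (try rewrite Rabs_left1; lra); reflexivity. }
  destruct (Req_dec m t) as [<- | Hne]; [exact Hgm | exfalso].
  set (x := Rmin t (m + d / 2)).
  assert (x <= t) by apply Rmin_l; assert (x <= m + d / 2) by apply Rmin_r.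
  assert (m < x) by (apply Rmin_glb_lt; lra).
  assert (E x); [|assert (x <= m) by (apply Hub; assumption); lra].
  split; [lra|]; intros y Hy.
  destruct (Rlt_dec y m); [apply Hbelow; lra|].
  rewrite Hgd, Hgm by (try rewrite Rabs_right; lra); reflexivity.
Qed.

Definition twice_area (a b c : pt) : R := cross (vsub b a) (vsub c a).

Definition perim (a b c : pt) : R :=
  norm (vsub b a) + norm (vsub c b) + norm (vsub a c).

Definition inradius (a b c : pt) : R := Rabs (twice_area a b c) / perim a b c.

Lemma edge_cross a b c j : (j < 3)%nat ->
  cross (vsub (vert a b c (j + 1)) (vert a b c j)) (vsub (vert a b c (prev j)) (vert a b c j))
  = twice_area a b c.
Proof.
  intro; destruct a, b, c; destruct j as [|[|[|j]]]; try lia;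
    unfold twice_area, cross, vsub; simpl; ring.
Qed.

Lemma corner_cross a b c j : (j < 3)%nat ->
  cross (vsub (vert a b c (prev j)) (vert a b c j)) (vsub (vert a b c (j + 1)) (vert a b c j))
  = - twice_area a b c.
Proof.
  intro; destruct a, b, c; destruct j as [|[|[|j]]]; try lia;
    unfold twice_area, cross, vsub; simpl; ring.
Qed.

Lemma side_gt0 a b c j : is_triangle a b c -> (j < 3)%nat ->
  0 < norm (vsub (vert a b c (j + 1)) (vert a b c j)).
Proof.
  intros HT Hj; apply (norm_gt0_of_cross _ (vsub (vert a b c (prev j)) (vert a b c j))).
  rewrite edge_cross by exact Hj; exact HT.
Qed.

Lemma perim_gt0 a b c : is_triangle a b c -> 0 < perim a b c.
Proof.
  intro HT; pose proof (side_gt0 a b c 0 HT ltac:(lia));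
    pose proof (side_gt0 a b c 1 HT ltac:(lia)); pose proof (side_gt0 a b c 2 HT ltac:(lia)).
  unfold perim, vert in *; simpl in *; lra.
Qed.

Lemma dist_sum_perim a b c : Defs.dist a b + Defs.dist b c + Defs.dist c a = perim a b c.
Proof.
  unfold Defs.dist, perim; rewrite (norm_vsub_sym a b), (norm_vsub_sym b c), (norm_vsub_sym c a); ring.
Qed.

Definition bary (a b c : pt) (l : nat -> R) : pt :=
  (l 0%nat * fst a + l 1%nat * fst b + l 2%nat * fst c,
   l 0%nat * snd a + l 1%nat * snd b + l 2%nat * snd c).

Section Barycentric.

Variables (a b c : pt) (l : nat -> R).
Hypothesis l_sum : l 0%nat + l 1%nat + l 2%nat = 1.

Lemma bary_sub_vert j : (j < 3)%nat ->
  vsub (bary a b c l) (vert a b c j) =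
  vadd (vscale (l (prev j)) (vsub (vert a b c (prev j)) (vert a b c j)))
       (vscale (l (next j)) (vsub (vert a b c (j + 1)) (vert a b c j))).
Proof.
  intro; destruct a, b, c; destruct j as [|[|[|j]]]; try lia;
    unfold bary, vsub, vadd, vscale, prev, next; simpl; f_equal; nra.
Qed.

Lemma cross_edge_bary j : (j < 3)%nat ->
  cross (vsub (vert a b c (j + 1)) (vert a b c j)) (vsub (bary a b c l) (vert a b c j))
  = l (prev j) * twice_area a b c.
Proof.
  intro; destruct a, b, c; destruct j as [|[|[|j]]]; try lia;
    unfold bary, twice_area, cross, vsub, prev; simpl; nra.
Qed.

Hypothesis HT : is_triangle a b c.
Hypothesis l_ge0 : forall k, (k < 3)%nat -> 0 <= l k.

Lemma bary_bisector_dot j : (j < 3)%nat ->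
  0 <= dot (vsub (bary a b c l) (vert a b c j)) (bis a b c j) /\
  (l j < 1 -> 0 < dot (vsub (bary a b c l) (vert a b c j)) (bis a b c j)).
Proof.
  intro Hj; rewrite bary_sub_vert by exact Hj; unfold bis.
  assert (Hprev : (prev j < 3)%nat) by (apply Nat.mod_upper_bound; lia).
  assert (Hnext : (next j < 3)%nat) by (apply Nat.mod_upper_bound; lia).
  assert (Hsum : l (prev j) + l (next j) = 1 - l j)
    by (destruct j as [|[|[|j]]]; try lia; unfold prev, next; simpl; lra).
  destruct (bisector_dot_cone (vsub (vert a b c (prev j)) (vert a b c j))
              (vsub (vert a b c (j + 1)) (vert a b c j)) (l (prev j)) (l (next j)))
    as [H0 Hpos]; auto.
  - rewrite corner_cross by exact Hj; intro E; apply HT; change (twice_area a b c = 0); lra.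
  - split; [exact H0 | intro; apply Hpos; lra].
Qed.

Lemma piece_bary w j : (j < 3)%nat ->
  piece a b c w j (bary a b c l) <->
  Rabs (l (prev j) * twice_area a b c / norm (vsub (vert a b c (j + 1)) (vert a b c j))) < w / 2.
Proof.
  intro Hj; unfold piece, in_strip; rewrite cross_unitv_l, cross_edge_bary by exact Hj.
  split; [tauto | intro Hs; split; [exact Hs | split]].
  - exact (proj1 (bary_bisector_dot j Hj)).
  - destruct j as [|[|[|j]]]; try lia.
    + exact (proj1 (bary_bisector_dot 1 ltac:(lia))).
    + exact (proj1 (bary_bisector_dot 2 ltac:(lia))).
    + exact (proj1 (bary_bisector_dot 0 ltac:(lia))).
Qed.

End Barycentric.

(* Barycentric coordinates of the incenter are proportional to the opposite sides. *)
Definition inweight (a b c : pt) (k : nat) : R :=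
  norm (vsub (vert a b c (k + 2)) (vert a b c (k + 1))) / perim a b c.

Definition incenter (a b c : pt) : pt := bary a b c (inweight a b c).

Definition toward_incenter (a b c : pt) (i : nat) (t : R) : pt :=
  vadd (vert a b c i) (vscale t (vsub (incenter a b c) (vert a b c i))).

Definition segment_coord (a b c : pt) (i : nat) (t : R) (k : nat) : R :=
  t * inweight a b c k + (if Nat.eqb k i then 1 - t else 0).

Section IncenterSegment.

Variables a b c : pt.
Hypothesis HT : is_triangle a b c.

Lemma inweight_gt0 k : (k < 3)%nat -> 0 < inweight a b c k.
Proof.
  intro Hk; apply Rdiv_lt_0_compat; [|exact (perim_gt0 a b c HT)].
  destruct k as [|[|[|k]]]; try lia.
  - exact (side_gt0 a b c 1 HT ltac:(lia)).
  - exact (side_gt0 a b c 2 HT ltac:(lia)).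
  - exact (side_gt0 a b c 0 HT ltac:(lia)).
Qed.

Lemma inweight_sum : inweight a b c 0 + inweight a b c 1 + inweight a b c 2 = 1.
Proof.
  pose proof (perim_gt0 a b c HT); unfold inweight, perim in *; unfold vert; simpl.
  field; lra.
Qed.

Lemma edge_inweight j : (j < 3)%nat ->
  norm (vsub (vert a b c (j + 1)) (vert a b c j)) = perim a b c * inweight a b c (prev j).
Proof.
  intro Hj; pose proof (perim_gt0 a b c HT); unfold inweight.
  destruct j as [|[|[|j]]]; try lia; unfold vert, prev; simpl; field; lra.
Qed.

Lemma toward_incenter_bary i t : (i < 3)%nat ->
  toward_incenter a b c i t = bary a b c (segment_coord a b c i t).
Proof.
  intro Hi; pose proof inweight_sum as S.
  unfold toward_incenter, incenter, segment_coord, bary, vadd, vscale, vsub.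
  destruct i as [|[|[|i]]]; try lia; unfold vert; simpl; f_equal; nra.
Qed.

Lemma segment_coord_facts i t : (i < 3)%nat -> 0 < t <= 1 ->
  segment_coord a b c i t 0 + segment_coord a b c i t 1 + segment_coord a b c i t 2 = 1 /\
  (forall k, (k < 3)%nat -> 0 <= segment_coord a b c i t k) /\
  segment_coord a b c i t i < 1.
Proof.
  intros Hi Ht; pose proof inweight_sum.
  pose proof (inweight_gt0 0 ltac:(lia)); pose proof (inweight_gt0 1 ltac:(lia));
    pose proof (inweight_gt0 2 ltac:(lia)).
  unfold segment_coord; split; [|split].
  - destruct i as [|[|[|i]]]; try lia; cbn [Nat.eqb]; nra.
  - intros k Hk; pose proof (inweight_gt0 k Hk).
    destruct (Nat.eqb k i); nra.
  - rewrite Nat.eqb_refl; destruct i as [|[|[|i]]]; try lia; nra.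
Qed.

Lemma segment_piece w i j t : (i < 3)%nat -> (j < 3)%nat -> prev j <> i -> 0 < t <= 1 ->
  inradius a b c < w / 2 -> piece a b c w j (toward_incenter a b c i t).
Proof.
  intros Hi Hj Hji Ht Hr; destruct (segment_coord_facts i t Hi Ht) as [S [N _]].
  rewrite toward_incenter_bary by exact Hi; apply piece_bary; auto.
  rewrite edge_inweight by exact Hj; unfold segment_coord.
  rewrite (proj2 (Nat.eqb_neq _ _) Hji), Rplus_0_r.
  assert (0 < inweight a b c (prev j)) by (apply inweight_gt0, Nat.mod_upper_bound; lia).
  pose proof (perim_gt0 a b c HT).
  replace (t * inweight a b c (prev j) * twice_area a b c / (perim a b c * inweight a b c (prev j)))
    with (t * (twice_area a b c / perim a b c)) by (field; lra).
  rewrite Rabs_mult, Rabs_div_pos, (Rabs_right t) by lra.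
  unfold inradius in Hr; pose proof (Rabs_pos (twice_area a b c)).
  assert (0 <= Rabs (twice_area a b c) / perim a b c) by (apply Rle_mult_inv_pos; lra).
  nra.
Qed.

Lemma on_fold_dot w i p : on_fold a b c w i p -> dot (vsub p (vert a b c i)) (bis a b c i) = 0.
Proof.
  intros [l [_ ->]]; destruct (bis a b c i), (vert a b c i).
  unfold dot, vsub, vadd, vscale, unitv, perp; simpl; unfold Rdiv; ring.
Qed.

Lemma segment_overlap w i t : (i < 3)%nat -> 0 < t <= 1 -> inradius a b c < w / 2 ->
  overlap a b c w (i, toward_incenter a b c i t) (prev i, toward_incenter a b c i t).
Proof.
  intros Hi Ht Hr.
  assert (Hprev : (prev i < 3)%nat) by (apply Nat.mod_upper_bound; lia).
  assert (Hoff : ~ on_fold a b c w i (toward_incenter a b c i t)).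
  { intro Hf; apply on_fold_dot in Hf.
    destruct (segment_coord_facts i t Hi Ht) as [S [N Hlt]].
    rewrite toward_incenter_bary in Hf by exact Hi.
    pose proof (proj2 (bary_bisector_dot a b c _ S HT N i Hi) Hlt); lra. }
  split; [|split; [|split]].
  - split; [exact Hi | apply segment_piece; auto].
    destruct i as [|[|[|i]]]; try lia; discriminate.
  - split; [exact Hprev | apply segment_piece; auto].
    destruct i as [|[|[|i]]]; try lia; discriminate.
  - reflexivity.
  - intros [_ [E | [[E _] | [_ Hf]]]]; simpl in *.
    + destruct i as [|[|[|i]]]; try lia; discriminate.
    + destruct i as [|[|[|i]]]; try lia; discriminate.
    + exact (Hoff Hf).
Qed.

End IncenterSegment.

Lemma toward_incenter_one a b c i : toward_incenter a b c i 1 = incenter a b c.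
Proof.
  unfold toward_incenter; destruct (incenter a b c), (vert a b c i);
    unfold vadd, vscale, vsub; simpl; f_equal; ring.
Qed.

Lemma overlap_sym a b c w x y : overlap a b c w x y -> overlap a b c w y x.
Proof.
  intros [Hx [Hy [E Hns]]]; split; [exact Hy | split; [exact Hx | split; [auto |]]].
  intros [_ [E' | [[E' Hf] | [E' Hf]]]]; apply Hns; split; auto; rewrite E in *; auto.
Qed.

Lemma incenter_overlap a b c w i : is_triangle a b c -> (i < 3)%nat -> inradius a b c < w / 2 ->
  overlap a b c w (i, incenter a b c) (prev i, incenter a b c).
Proof.
  intros HT Hi Hr; rewrite <- (toward_incenter_one a b c i).
  apply segment_overlap; auto; lra.
Qed.

Lemma fold_halflength_gt0 a b c w i : is_triangle a b c -> (i < 3)%nat -> 0 < w ->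
  0 < w / (2 * cos (fold_angle a b c i / 2)).
Proof.
  intros HT Hi Hw; apply Rdiv_lt_0_compat; [exact Hw|].
  assert (Hc : cross (vsub (vert a b c (prev i)) (vert a b c i))
                     (vsub (vert a b c (i + 1)) (vert a b c i)) <> 0).
  { rewrite corner_cross by exact Hi; intro E; apply HT; change (twice_area a b c = 0); lra. }
  pose proof (abs_dot_lt_norm_mul _ _ Hc) as Hd; apply Rabs_def2 in Hd.
  destruct (norm_gt0_of_cross _ _ Hc) as [Hu Hv].
  unfold fold_angle; cbv zeta.
  match goal with |- context [acos ?x] => set (r := x) end.
  assert (Hr : -1 < r).
  { unfold r; apply (Rmult_lt_reg_r (norm (vsub (vert a b c (prev i)) (vert a b c i))
                                    * norm (vsub (vert a b c (i + 1)) (vert a b c i)))); [nra|].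
    unfold Rdiv; rewrite Rmult_assoc, Rinv_l by nra; lra. }
  assert (acos r < PI).
  { destruct (Rlt_dec r 1); [apply acos_bound_lt; lra|].
    unfold acos; destruct (Rle_dec r (-1)); [lra|].
    destruct (Rle_dec 1 r); [apply PI_RGT_0 | lra]. }
  pose proof (acos_bound r).
  assert (0 < cos (acos r / 2)) by (apply cos_gt_0; lra).
  lra.
Qed.

Lemma vert_on_fold a b c w i : is_triangle a b c -> (i < 3)%nat -> 0 < w ->
  on_fold a b c w i (vert a b c i).
Proof.
  intros HT Hi Hw; exists 0; split.
  - rewrite Rabs_R0; apply fold_halflength_gt0; assumption.
  - destruct (vert a b c i), (unitv (perp (bis a b c i))); unfold vadd, vscale; simpl; f_equal; ring.
Qed.

Definition fold_sign (F : nat -> bool) (i : nat) : Z := if F i then 1%Z else (-1)%Z.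

Section CrossingAtIncenter.

Variables (a b c : pt) (w : R) (F : nat -> bool) (eps : rpt -> rpt -> Z).
Hypothesis HT : is_triangle a b c.
Hypothesis Hw : 0 < w.
Hypothesis Heps : crossing_info a b c w eps.
Hypothesis HF : agrees a b c w F eps.
Hypothesis Hr : inradius a b c < w / 2.

Let crossing_along i t :=
  eps (i, toward_incenter a b c i t) (prev i, toward_incenter a b c i t).

Lemma crossing_along_constant i t : (i < 3)%nat -> 0 < t <= 1 ->
  crossing_along i 1 = crossing_along i t.
Proof.
  intros Hi Ht; apply locally_constant_eq; [lra|]; intros t0 Ht0.
  destruct Heps as [_ [_ [_ [_ Hcont]]]].
  destruct (Hcont _ _ (segment_overlap a b c HT w i t0 Hi ltac:(lra) Hr)) as [d [Hd Hnear]].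
  pose proof (norm_ge0 (vsub (incenter a b c) (vert a b c i))).
  set (M := norm (vsub (incenter a b c) (vert a b c i))) in *.
  exists (d / (M + 1)); split; [apply Rdiv_lt_0_compat; lra|]; intros t' Ht' Hclose.
  assert (Hdist : Defs.dist (toward_incenter a b c i t0) (toward_incenter a b c i t') < d).
  { unfold toward_incenter; rewrite dist_affine, Rabs_minus_sym; fold M.
    apply (Rmult_lt_compat_r (M + 1)) in Hclose; [|lra].
    replace (d / (M + 1) * (M + 1)) with d in Hclose by (field; lra).
    pose proof (Rabs_pos (t' - t0)); nra. }
  apply Hnear; [apply segment_overlap; auto; lra | |];
    (split; [exact Hdist | split; [reflexivity | left; reflexivity]]).
Qed.

Lemma crossing_along_near_vertex i : (i < 3)%nat ->
  exists t, 0 < t <= 1 /\ crossing_along i t = fold_sign F i.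
Proof.
  intro Hi; destruct (HF i Hi) as [d [Hd Hag]].
  pose proof (norm_ge0 (vsub (incenter a b c) (vert a b c i))).
  set (M := norm (vsub (incenter a b c) (vert a b c i))) in *.
  set (t := Rmin 1 (d / (2 * (M + 1)))).
  assert (Ht1 : t <= 1) by apply Rmin_l.
  assert (Htd : t <= d / (2 * (M + 1))) by apply Rmin_r.
  assert (Ht0 : 0 < t) by (apply Rmin_glb_lt; [lra | apply Rdiv_lt_0_compat; lra]).
  exists t; split; [lra|].
  destruct (segment_overlap a b c HT w i t Hi ltac:(lra) Hr) as [Hx [Hy [_ Hns]]].
  apply Hag; auto.
  exists (vert a b c i); split; [apply vert_on_fold; assumption|].
  unfold toward_incenter; rewrite dist_affine_base, Rabs_right by lra; fold M.
  apply (Rmult_le_compat_r M) in Htd; [|lra].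
  replace (d / (2 * (M + 1)) * M) with (d * (M / (2 * (M + 1)))) in Htd by (field; lra).
  assert (M / (2 * (M + 1)) < 1)
    by (apply (Rmult_lt_reg_r (2 * (M + 1))); [lra|]; unfold Rdiv; rewrite Rmult_assoc, Rinv_l; lra).
  nra.
Qed.

Lemma crossing_at_incenter i : (i < 3)%nat ->
  eps (i, incenter a b c) (prev i, incenter a b c) = fold_sign F i.
Proof.
  intro Hi; destruct (crossing_along_near_vertex i Hi) as [t [Ht Hsign]].
  rewrite <- Hsign, <- crossing_along_constant by assumption.
  unfold crossing_along; rewrite toward_incenter_one; reflexivity.
Qed.

End CrossingAtIncenter.

Lemma half_width_le_inradius a b c w F : same_type F -> allowed a b c w F ->
  w / 2 <= inradius a b c.
Proof.
  intros [F01 F12] [HT [Hw [_ [eps [Heps HF]]]]]; apply Rnot_lt_le; intro Hr.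
  pose proof (crossing_at_incenter a b c w F eps HT Hw Heps HF Hr) as Hc.
  pose proof (Hc 0%nat ltac:(lia)) as C0; pose proof (Hc 1%nat ltac:(lia)) as C1;
    pose proof (Hc 2%nat ltac:(lia)) as C2.
  pose proof (incenter_overlap a b c w 0 HT ltac:(lia) Hr) as O0;
    pose proof (incenter_overlap a b c w 1 HT ltac:(lia) Hr) as O1;
    pose proof (incenter_overlap a b c w 2 HT ltac:(lia) Hr) as O2.
  unfold prev, fold_sign in *; simpl Nat.modulo in *.
  rewrite <- F12, <- F01 in C2; rewrite <- F01 in C1.
  destruct Heps as [_ [_ [Hanti [Htrans _]]]].
  destruct (F 0%nat).
  - assert (E : eps (2%nat, incenter a b c) (0%nat, incenter a b c) = 1%Z)
      by (apply (Htrans _ (1%nat, incenter a b c)); auto; apply overlap_sym; auto).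
    rewrite (Hanti _ _ O0), C0 in E; discriminate.
  - assert (E : eps (0%nat, incenter a b c) (2%nat, incenter a b c) = 1%Z).
    { apply (Htrans _ (1%nat, incenter a b c)).
      - apply overlap_sym; exact O1.
      - apply overlap_sym; exact O2.
      - exact O0.
      - rewrite (Hanti _ _ O1), C1; reflexivity.
      - rewrite (Hanti _ _ O2), C2; reflexivity. }
    rewrite C0 in E; discriminate.
Qed.

Lemma heron a b c :
  let x := norm (vsub b a) in let y := norm (vsub c b) in let z := norm (vsub a c) in
  4 * (twice_area a b c * twice_area a b c) =
  (x + y + z) * ((- x + y + z) * (x - y + z) * (x + y - z)).
Proof.
  intros x y z.
  transitivity (2 * ((x * x) * (y * y) + (y * y) * (z * z) + (z * z) * (x * x))
                - (x * x) * (x * x) - (y * y) * (y * y) - (z * z) * (z * z)); [|ring].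
  unfold x, y, z; rewrite !norm_sq.
  destruct a, b, c; unfold twice_area, cross, dot, vsub; simpl; ring.
Qed.

Lemma amgm3 p q r : 0 <= p -> 0 <= q -> 0 <= r -> 27 * (p * q * r) <= (p + q + r) ^ 3.
Proof.
  intros Hp Hq Hr.
  assert (E : (p + q + r) ^ 3 - 27 * (p * q * r) =
    (p + q + r) * ((p - q) * (p - q) + (q - r) * (q - r) + (r - p) * (r - p)) / 2 +
    3 * (p * ((q - r) * (q - r)) + q * ((r - p) * (r - p)) + r * ((p - q) * (p - q))))
    by field.
  pose proof (Rle_0_sqr (p - q)); pose proof (Rle_0_sqr (q - r)); pose proof (Rle_0_sqr (r - p)).
  unfold Rsqr in *.
  assert (0 <= (p + q + r) * ((p - q) * (p - q) + (q - r) * (q - r) + (r - p) * (r - p)))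
    by (apply Rmult_le_pos; lra).
  assert (0 <= p * ((q - r) * (q - r))) by (apply Rmult_le_pos; lra).
  assert (0 <= q * ((r - p) * (r - p))) by (apply Rmult_le_pos; lra).
  assert (0 <= r * ((p - q) * (p - q))) by (apply Rmult_le_pos; lra).
  lra.
Qed.

Lemma factors_nonneg p q r : 0 <= p + q -> 0 <= q + r -> 0 <= r + p -> 0 <= p * q * r ->
  0 <= p /\ 0 <= q /\ 0 <= r.
Proof.
  intros Hpq Hqr Hrp Hpqr.
  assert (Hneg : forall u v t, 0 <= u + v -> 0 <= t + u -> u < 0 -> u * (v * t) < 0)
    by (intros u v t Huv Htu Hu; assert (0 < v * t) by nra; nra).
  repeat split; apply Rnot_lt_le; intro Hlt.
  - pose proof (Hneg p q r); nra.
  - pose proof (Hneg q r p); nra.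
  - pose proof (Hneg r p q); nra.
Qed.

Lemma isoperimetric_triangle a b c : is_triangle a b c ->
  6 * sqrt 3 * inradius a b c <= perim a b c.
Proof.
  intro HT; pose proof (perim_gt0 a b c HT) as HP; pose proof (heron a b c) as Hh.
  pose proof (norm_ge0 (vsub b a)); pose proof (norm_ge0 (vsub c b));
    pose proof (norm_ge0 (vsub a c)).
  unfold inradius, perim in *; cbv zeta in Hh.
  set (x := norm (vsub b a)) in *; set (y := norm (vsub c b)) in *;
    set (z := norm (vsub a c)) in *; set (K := twice_area a b c) in *.
  destruct (factors_nonneg (- x + y + z) (x - y + z) (x + y - z)) as [Hp [Hq Hr]];
    try lra; [nra|].
  pose proof (amgm3 _ _ _ Hp Hq Hr) as AM.
  replace (- x + y + z + (x - y + z) + (x + y - z)) with (x + y + z) in AM by ring.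
  assert (H108 : 108 * (K * K) <= ((x + y + z) * (x + y + z)) * ((x + y + z) * (x + y + z)))
    by nra.
  assert (Hs : sqrt 3 * sqrt 3 = 3) by (apply sqrt_sqrt; lra).
  pose proof (sqrt_pos 3); pose proof (Rabs_pos K).
  assert (HK : Rabs K * Rabs K = K * K) by (rewrite <- Rabs_mult; apply Rabs_right; nra).
  apply (Rmult_le_reg_r (x + y + z)); [lra|].
  replace (6 * sqrt 3 * (Rabs K / (x + y + z)) * (x + y + z)) with (6 * sqrt 3 * Rabs K)
    by (field; lra).
  apply Rsqr_incr_0_var; unfold Rsqr; nra.
Qed.

Lemma ribbonlength_lower_bound a b c w F : same_type F -> allowed a b c w F ->
  3 * sqrt 3 <= ribbonlength a b c w.
Proof.
  intros HF HA; pose proof (half_width_le_inradius a b c w F HF HA) as Hr.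
  destruct HA as [HT [Hw _]]; pose proof (isoperimetric_triangle a b c HT) as Hiso.
  pose proof (sqrt_pos 3).
  unfold ribbonlength; rewrite dist_sum_perim.
  apply (Rmult_le_reg_r w); [exact Hw|].
  replace (perim a b c / w * w) with (perim a b c) by (field; lra).
  nra.
Qed.

(* Any two distinct pieces are adjacent, so "piece [i] lies over piece
   [prev i] exactly at overfolds" decides every crossing. *)
Definition fold_crossing (F : nat -> bool) (x y : rpt) : Z :=
  if Nat.eqb (fst y) (prev (fst x)) then fold_sign F 0
  else if Nat.eqb (fst x) (prev (fst y)) then (- fold_sign F 0)%Z else 0%Z.

Lemma overlap_pieces a b c w x y : overlap a b c w x y ->
  (fst x < 3)%nat /\ (fst y < 3)%nat /\ fst x <> fst y.
Proof.
  intros [[Hx _] [[Hy _] [E Hns]]]; repeat split; auto.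
  intro Exy; apply Hns; split; auto.
Qed.

Section SeparatedFolds.

Variables (a b c : pt) (w : R).
Hypothesis fold_off_strip : forall k p, (k < 3)%nat ->
  on_fold a b c w k p -> ~ in_strip a b c w (next k) p.

Lemma overlap_off_fold x y k : overlap a b c w x y -> (k < 3)%nat ->
  fst x = k \/ fst x = prev k -> ~ on_fold a b c w k (snd x).
Proof.
  intros Hxy Hk Hx Hf; destruct (overlap_pieces _ _ _ _ _ _ Hxy) as [Ix [Iy Ixy]].
  destruct Hxy as [_ [[_ [Hs _]] [E Hns]]].
  destruct x as [i p], y as [j q]; simpl in *; subst q.
  apply (fold_off_strip k p Hk Hf).
  destruct k as [|[|[|k]]]; try lia; unfold prev, next in *; simpl in *;
    destruct i as [|[|[|i]]]; try lia; destruct j as [|[|[|j]]]; try lia; auto;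
    exfalso; apply Hns; split; auto; simpl; unfold next; simpl; auto.
Qed.

Lemma same_rpt_overlap_fst x y z : overlap a b c w x y -> same_rpt a b c w x z -> fst z = fst x.
Proof.
  intros Hxy [_ [E | [[E Hf] | [E Hf]]]]; [auto | exfalso..].
  - destruct (overlap_pieces _ _ _ _ _ _ Hxy) as [Ix _].
    apply (overlap_off_fold x y (fst z) Hxy); auto.
    + rewrite E; apply Nat.mod_upper_bound; lia.
    + right; rewrite E; destruct (fst x) as [|[|[|i]]]; try lia; reflexivity.
  - destruct (overlap_pieces _ _ _ _ _ _ Hxy) as [Ix _].
    exact (overlap_off_fold x y (fst x) Hxy Ix (or_introl eq_refl) Hf).
Qed.

Lemma fold_crossing_info F : same_type F ->
  (forall p, ~ (in_strip a b c w 0 p /\ in_strip a b c w 1 p /\ in_strip a b c w 2 p)) ->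
  crossing_info a b c w (fold_crossing F) /\ agrees a b c w F (fold_crossing F).
Proof.
  intros [F01 F12] Hno3.
  assert (Hrep : forall x y x' y', overlap a b c w x y -> same_rpt a b c w x x' ->
            same_rpt a b c w y y' -> fold_crossing F x' y' = fold_crossing F x y).
  { intros x y x' y' Hxy Hx Hy; unfold fold_crossing.
    rewrite (same_rpt_overlap_fst x y x' Hxy Hx),
            (same_rpt_overlap_fst y x y' (overlap_sym _ _ _ _ _ _ Hxy) Hy); reflexivity. }
  split; [split; [|split; [|split; [|split]]] |].
  - intros x y Hxy; destruct (overlap_pieces _ _ _ _ _ _ Hxy) as [Ix [Iy Ixy]].
    destruct x as [i p], y as [j q]; unfold fold_crossing, fold_sign; simpl in *.
    destruct (F 0%nat);
      destruct i as [|[|[|i]]]; try lia; destruct j as [|[|[|j]]]; try lia; simpl; auto.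
  - intros x x' y y' Hxy _ _; exact (Hrep x y x' y' Hxy).
  - intros x y Hxy; destruct (overlap_pieces _ _ _ _ _ _ Hxy) as [Ix [Iy Ixy]].
    destruct x as [i p], y as [j q]; unfold fold_crossing, fold_sign; simpl in *.
    destruct (F 0%nat);
      destruct i as [|[|[|i]]]; try lia; destruct j as [|[|[|j]]]; try lia; simpl; auto.
  - intros x y z Hxy Hyz Hxz; exfalso.
    destruct (overlap_pieces _ _ _ _ _ _ Hxy) as [Ix [Iy Ixy]].
    destruct (overlap_pieces _ _ _ _ _ _ Hyz) as [_ [Iz Iyz]].
    destruct (overlap_pieces _ _ _ _ _ _ Hxz) as [_ [_ Ixz]].
    destruct Hxy as [[_ [Sx _]] [[_ [Sy _]] [E1 _]]], Hyz as [_ [[_ [Sz _]] [E2 _]]].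
    destruct x as [i p], y as [j q], z as [k r]; simpl in *; subst q r.
    destruct i as [|[|[|i]]]; try lia; destruct j as [|[|[|j]]]; try lia;
      destruct k as [|[|[|k]]]; try lia; apply (Hno3 p); auto.
  - intros x y Hxy; exists 1; split; [lra|].
    intros x' y' _ [_ Hx] [_ Hy]; exact (Hrep x y (fst x', snd x) (fst y', snd y) Hxy Hx Hy).
  - intros i Hi; exists 1; split; [lra|]; intros p _ _ _ _.
    unfold fold_crossing, fold_sign; simpl; rewrite Nat.eqb_refl.
    destruct i as [|[|[|i]]]; try lia; rewrite ?F01, ?F12; reflexivity.
Qed.

End SeparatedFolds.

(* The cross products measuring the distances from [p] to the three side lines
   sum to twice the area [K], while within all three strips the sum of their
   absolute values is below [w P / 2 <= |K|]. *)
Lemma no_common_strip_point a b c w p : is_triangle a b c -> w / 2 <= inradius a b c ->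
  ~ (in_strip a b c w 0 p /\ in_strip a b c w 1 p /\ in_strip a b c w 2 p).
Proof.
  intros HT Hr [H0 [H1 H2]]; unfold in_strip in *; rewrite !cross_unitv_l in *.
  pose proof (side_gt0 a b c 0 HT ltac:(lia)); pose proof (side_gt0 a b c 1 HT ltac:(lia));
    pose proof (side_gt0 a b c 2 HT ltac:(lia)).
  pose proof (perim_gt0 a b c HT).
  assert (Hsum : cross (vsub b a) (vsub p a) + cross (vsub c b) (vsub p b)
                 + cross (vsub a c) (vsub p c) = twice_area a b c)
    by (destruct a, b, c, p; unfold twice_area, cross, vsub; simpl; ring).
  unfold inradius, perim, vert in *; simpl in *.
  rewrite Rabs_div_pos in H0, H1, H2 by assumption.
  set (x := cross (vsub b a) (vsub p a)) in *; set (y := cross (vsub c b) (vsub p b)) in *;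
    set (z := cross (vsub a c) (vsub p c)) in *.
  apply (Rmult_lt_compat_r (norm (vsub b a))) in H0; [|lra].
  apply (Rmult_lt_compat_r (norm (vsub c b))) in H1; [|lra].
  apply (Rmult_lt_compat_r (norm (vsub a c))) in H2; [|lra].
  unfold Rdiv in H0, H1, H2; rewrite !Rmult_assoc, !Rinv_l, !Rmult_1_r in H0, H1, H2 by lra.
  apply (Rmult_le_compat_r (norm (vsub b a) + norm (vsub c b) + norm (vsub a c))) in Hr; [|lra].
  replace (Rabs (twice_area a b c) / (norm (vsub b a) + norm (vsub c b) + norm (vsub a c))
           * (norm (vsub b a) + norm (vsub c b) + norm (vsub a c)))
    with (Rabs (twice_area a b c)) in Hr by (field; lra).
  pose proof (Rabs_triang (x + y) z); pose proof (Rabs_triang x y).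
  rewrite Hsum in *; lra.
Qed.

(* At an isosceles corner the fold line is parallel to the opposite side. *)
Lemma isosceles_fold_cross P Q S l : norm (vsub P Q) = norm (vsub S Q) -> 0 < norm (vsub P Q) ->
  cross (vsub P S) (vsub (vadd Q (vscale l (unitv (perp (vadd (unitv (vsub P Q)) (unitv (vsub S Q))))))) S)
  = cross (vsub P S) (vsub Q S).
Proof.
  intros Hiso Hpos.
  set (d := vadd (unitv (vsub P Q)) (unitv (vsub S Q))).
  assert (Hd : dot (vsub P S) d = 0).
  { unfold d; rewrite dot_unitv_sum, <- Hiso.
    assert (E : dot (vsub P S) (vsub P Q) + dot (vsub P S) (vsub S Q) = 0).
    { replace (dot (vsub P S) (vsub P Q) + dot (vsub P S) (vsub S Q))
        with (dot (vsub P Q) (vsub P Q) - dot (vsub S Q) (vsub S Q))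
        by (destruct P, Q, S; unfold dot, vsub; simpl; ring).
      rewrite <- !norm_sq, Hiso; ring. }
    unfold Rdiv; rewrite <- Rmult_plus_distr_r, E; ring. }
  assert (Hc : cross (vsub P S) (unitv (perp d)) = 0).
  { rewrite cross_unitv_r; replace (cross (vsub P S) (perp d)) with (dot (vsub P S) d)
      by (destruct (vsub P S), d; unfold cross, dot, perp; simpl; ring).
    rewrite Hd; unfold Rdiv; ring. }
  transitivity (cross (vsub P S) (vsub Q S) + l * cross (vsub P S) (unitv (perp d)));
    [|rewrite Hc; ring].
  destruct (unitv (perp d)), P, Q, S; unfold cross, vsub, vadd, vscale; simpl; ring.
Qed.

Lemma isosceles_fold_off_strip a b c w k p : is_triangle a b c -> (k < 3)%nat ->
  norm (vsub (vert a b c (prev k)) (vert a b c k)) = norm (vsub (vert a b c (k + 1)) (vert a b c k)) ->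
  w / 2 <= inradius a b c -> on_fold a b c w k p -> ~ in_strip a b c w (next k) p.
Proof.
  intros HT Hk Hiso Hr [l [_ ->]].
  pose proof (side_gt0 a b c 0 HT ltac:(lia)); pose proof (side_gt0 a b c 1 HT ltac:(lia));
    pose proof (side_gt0 a b c 2 HT ltac:(lia)).
  assert (Hcorner : 0 < norm (vsub (vert a b c (prev k)) (vert a b c k))).
  { apply (norm_gt0_of_cross _ (vsub (vert a b c (k + 1)) (vert a b c k))).
    rewrite corner_cross by exact Hk; intro E; apply HT; change (twice_area a b c = 0); lra. }
  assert (Hside : 0 < norm (vsub (vert a b c (prev k)) (vert a b c (k + 1))) <= perim a b c)
    by (unfold perim; destruct k as [|[|[|k]]]; try lia; unfold prev, vert in *; simpl in *; lra).
  assert (Hheight : cross (vsub (vert a b c (prev k)) (vert a b c (k + 1)))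
                          (vsub (vert a b c k) (vert a b c (k + 1))) = twice_area a b c)
    by (destruct a, b, c; destruct k as [|[|[|k]]]; try lia;
        unfold twice_area, cross, vsub; simpl; ring).
  unfold in_strip, bis; rewrite cross_unitv_l.
  replace (vert a b c (next k + 1)) with (vert a b c (prev k))
    by (destruct k as [|[|[|k]]]; try lia; reflexivity).
  replace (vert a b c (next k)) with (vert a b c (k + 1))
    by (destruct k as [|[|[|k]]]; try lia; reflexivity).
  rewrite isosceles_fold_cross, Hheight, Rabs_div_pos by lra.
  unfold inradius in Hr; apply Rle_not_lt, (Rle_trans _ _ _ Hr).
  apply Rmult_le_compat_l; [apply Rabs_pos|].
  apply Rinv_le_contravar; lra.
Qed.

Lemma equilateral_norms a b c : equilateral a b c ->
  norm (vsub a b) = norm (vsub b a) /\ norm (vsub c b) = norm (vsub b a) /\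
  norm (vsub b c) = norm (vsub b a) /\ norm (vsub a c) = norm (vsub b a) /\
  norm (vsub c a) = norm (vsub b a).
Proof.
  intros [E1 E2]; unfold Defs.dist in *.
  rewrite (norm_vsub_sym c b), (norm_vsub_sym a c), (norm_vsub_sym b a); lra.
Qed.

Lemma equilateral_twice_area a b c : equilateral a b c ->
  Rabs (twice_area a b c) = sqrt 3 * (norm (vsub b a) * norm (vsub b a)) / 2.
Proof.
  intro Heq; destruct (equilateral_norms a b c Heq) as [_ [Hcb [_ [_ Hca]]]].
  pose proof (norm_ge0 (vsub b a)) as Hs0; set (s := norm (vsub b a)) in *.
  assert (Hs : s * s = dot (vsub b a) (vsub b a)) by apply norm_sq.
  assert (Hd : dot (vsub b a) (vsub c a) = s * s / 2).
  { assert (Hlaw : dot (vsub c b) (vsub c b)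
            = dot (vsub c a) (vsub c a) - 2 * dot (vsub b a) (vsub c a) + dot (vsub b a) (vsub b a))
      by (destruct a, b, c; unfold dot, vsub; simpl; ring).
    rewrite <- (norm_sq (vsub c b)), <- (norm_sq (vsub c a)), Hcb, Hca, <- Hs in Hlaw; lra. }
  pose proof (lagrange_identity (vsub b a) (vsub c a)) as L.
  rewrite Hd, <- Hs, <- (norm_sq (vsub c a)), Hca in L; fold (twice_area a b c) in L.
  pose proof (sqrt_pos 3); assert (Hs3 : sqrt 3 * sqrt 3 = 3) by (apply sqrt_sqrt; lra).
  pose proof (Rabs_pos (twice_area a b c)).
  assert (Rabs (twice_area a b c) * Rabs (twice_area a b c)
          = (sqrt 3 * (s * s) / 2) * (sqrt 3 * (s * s) / 2)).
  { rewrite <- Rabs_mult, Rabs_right by nra.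
    replace ((sqrt 3 * (s * s) / 2) * (sqrt 3 * (s * s) / 2))
      with ((sqrt 3 * sqrt 3) * (s * s * (s * s)) / 4) by field.
    rewrite Hs3; lra. }
  assert (0 <= sqrt 3 * (s * s) / 2) by (apply Rle_mult_inv_pos; [apply Rmult_le_pos; nra | lra]).
  nra.
Qed.

Lemma equilateral_inradius a b c : is_triangle a b c -> equilateral a b c ->
  inradius a b c = sqrt 3 * norm (vsub b a) / 6.
Proof.
  intros HT Heq; pose proof (side_gt0 a b c 0 HT ltac:(lia)) as Hs; unfold vert in Hs; simpl in Hs.
  unfold inradius; rewrite equilateral_twice_area by exact Heq.
  replace (perim a b c) with (3 * norm (vsub b a)).
  - field; lra.
  - destruct (equilateral_norms a b c Heq) as [_ [E1 [_ [E2 _]]]]; unfold perim; lra.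
Qed.

Lemma dot_decomp_perp u w q :
  dot u u * dot q w = dot w u * dot q u + cross u w * cross u q.
Proof. destruct u, w, q; unfold dot, cross; simpl; ring. Qed.

(* The two bisector functionals at the ends of [AB] add up to
   [(3 s^2 / 2 + 2 K X / s^2) / s], where [X] is the cross product measuring the
   distance to the line [AB]; within the strip [|2 K X / s^2| < s^2 / 2]. *)
Lemma equilateral_edge_immersed A B C s p :
  norm (vsub B A) = s -> norm (vsub C A) = s -> norm (vsub C B) = s -> norm (vsub A B) = s ->
  0 < s -> Rabs (cross (vsub B A) (vsub C A)) = sqrt 3 * (s * s) / 2 ->
  Rabs (cross (unitv (vsub B A)) (vsub p A)) < sqrt 3 * s / 6 ->
  ~ (dot (vsub p A) (vadd (unitv (vsub C A)) (unitv (vsub B A))) < 0 /\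
     dot (vsub p B) (vadd (unitv (vsub A B)) (unitv (vsub C B))) < 0).
Proof.
  intros HBA HCA HCB HAB Hs HK HX [H1 H2].
  rewrite !dot_unitv_sum, HBA, HCA, HCB, HAB in *.
  rewrite cross_unitv_l, HBA, Rabs_div_pos in HX by lra.
  set (u := vsub B A) in *; set (v := vsub C A) in *; set (q := vsub p A) in *.
  assert (Huu : dot u u = s * s) by (rewrite <- norm_sq, HBA; reflexivity).
  assert (Hvv : dot v v = s * s) by (rewrite <- norm_sq, HCA; reflexivity).
  assert (Huv : dot u v = s * s / 2).
  { assert (Hlaw : dot (vsub C B) (vsub C B) = dot v v - 2 * dot u v + dot u u)
      by (unfold u, v; destruct A, B, C; unfold dot, vsub; simpl; ring).
    rewrite <- norm_sq, HCB in Hlaw; lra. }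
  assert (Hsum : dot q v + dot q u + (dot (vsub p B) (vsub A B) + dot (vsub p B) (vsub C B))
                 = dot q (vsub (vscale 2 v) u) - dot u v + 2 * dot u u)
    by (unfold q, u, v; destruct A, B, C, p; unfold dot, vsub, vscale; simpl; ring).
  assert (Hdist : dot u u * dot q (vsub (vscale 2 v) u) = 2 * cross u v * cross u q).
  { rewrite dot_decomp_perp.
    replace (dot (vsub (vscale 2 v) u) u) with (2 * dot u v - dot u u)
      by (destruct u, v; unfold dot, vsub, vscale; simpl; ring).
    replace (cross u (vsub (vscale 2 v) u)) with (2 * cross u v)
      by (destruct u, v; unfold cross, vsub, vscale; simpl; ring).
    rewrite Huu, Huv; field. }
  assert (Hs3 : sqrt 3 * sqrt 3 = 3) by (apply sqrt_sqrt; lra).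
  assert (HX' : Rabs (cross u q) < sqrt 3 * s * s / 6).
  { apply (Rmult_lt_compat_r s) in HX; [|lra].
    replace (Rabs (cross u q) / s * s) with (Rabs (cross u q)) in HX by (field; lra); lra. }
  assert (Hprod : Rabs (2 * cross u v * cross u q) < s * s * (s * s) / 2).
  { rewrite !Rabs_mult, HK, (Rabs_right 2) by lra.
    assert (0 < sqrt 3) by (apply sqrt_lt_R0; lra).
    apply Rlt_le_trans with (2 * (sqrt 3 * (s * s) / 2) * (sqrt 3 * s * s / 6));
      [apply Rmult_lt_compat_l; [nra | exact HX'] |].
    replace (2 * (sqrt 3 * (s * s) / 2) * (sqrt 3 * s * s / 6))
      with ((sqrt 3 * sqrt 3) * (s * s * (s * s)) / 6) by field.
    rewrite Hs3; lra. }
  apply Rabs_def2 in Hprod.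
  assert (Hneg : dot q v + dot q u + (dot (vsub p B) (vsub A B) + dot (vsub p B) (vsub C B)) < 0).
  { apply (Rmult_lt_reg_r (/ s)); [apply Rinv_0_lt_compat; lra|]. unfold Rdiv in H1, H2; lra. }
  rewrite Hsum, Huu, Huv in Hneg; rewrite Huu in Hdist.
  assert (0 < s * s) by nra.
  nra.
Qed.

Lemma equilateral_immersed a b c w : is_triangle a b c -> equilateral a b c ->
  w / 2 <= inradius a b c -> immersed a b c w.
Proof.
  intros HT Heq Hr i Hi p Hp.
  rewrite equilateral_inradius in Hr by assumption.
  pose proof (side_gt0 a b c 0 HT ltac:(lia)) as Hs; unfold vert in Hs; simpl in Hs.
  pose proof (equilateral_twice_area a b c Heq) as HK.
  destruct (equilateral_norms a b c Heq) as [Hab [Hcb [Hbc [Hac Hca]]]].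
  unfold in_strip in Hp.
  destruct i as [|[|[|i]]]; try lia; unfold bis, vert, prev in *; simpl in *;
    (apply (equilateral_edge_immersed _ _ _ (norm (vsub b a))); [auto.. | lra]);
    rewrite <- HK; f_equal; destruct a, b, c; unfold twice_area, cross, vsub; simpl; ring.
Qed.

Lemma equilateral_attains a b c F : is_triangle a b c -> equilateral a b c -> same_type F ->
  allowed a b c (2 * inradius a b c) F /\ ribbonlength a b c (2 * inradius a b c) = 3 * sqrt 3.
Proof.
  intros HT Heq HF.
  assert (Hhalf : 2 * inradius a b c / 2 <= inradius a b c) by lra.
  pose proof (side_gt0 a b c 0 HT ltac:(lia)) as Hs; unfold vert in Hs; simpl in Hs.
  pose proof (equilateral_inradius a b c HT Heq) as Hr.
  assert (Hs3 : sqrt 3 * sqrt 3 = 3) by (apply sqrt_sqrt; lra).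
  assert (0 < sqrt 3) by (apply sqrt_lt_R0; lra).
  split.
  - split; [exact HT | split; [rewrite Hr; nra | split; [apply equilateral_immersed; auto |]]].
    exists (fold_crossing F); apply fold_crossing_info; [| exact HF |].
    + intros k p Hk; apply isosceles_fold_off_strip; auto.
      destruct (equilateral_norms a b c Heq) as [Hab [Hcb [Hbc [Hac Hca]]]].
      destruct k as [|[|[|k]]]; try lia; unfold vert, prev; simpl; lra.
    + intro p; apply no_common_strip_point; auto.
  - unfold ribbonlength; rewrite dist_sum_perim, Hr.
    destruct (equilateral_norms a b c Heq) as [_ [E1 [_ [E2 _]]]].
    replace (perim a b c) with (3 * norm (vsub b a)) by (unfold perim; lra).
    replace (3 * norm (vsub b a) / (2 * (sqrt 3 * norm (vsub b a) / 6))) with (9 / sqrt 3)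
      by (field; lra).
    replace 9 with (3 * sqrt 3 * sqrt 3) by lra; field; lra.
Qed.

Theorem theorem5p6 :
  (forall (a b c : pt) (w : R) (F : nat -> bool),
      same_type F -> allowed a b c w F -> 3 * sqrt 3 <= ribbonlength a b c w) /\
  (forall (a b c : pt) (F : nat -> bool),
      is_triangle a b c -> equilateral a b c -> same_type F ->
      exists w : R, allowed a b c w F /\ ribbonlength a b c w = 3 * sqrt 3).
Proof.
  split.
  - exact ribbonlength_lower_bound.
  - intros a b c F HT Heq HF; exists (2 * inradius a b c).
    exact (equilateral_attains a b c F HT Heq HF).
Qed.
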